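(* Let $X$ be a reflexive Banach space over $\mathbb{K}\in\{\mathbb{R},\mathbb{C}\}$, let $W\subset\mathcal{B}$ be a non-empty compact set, and let $\mathcal{U}\subset\mathcal{W}(X)$ be a non-empty convex set. Let $[T]\in\mathcal{W}(X)$, $[L]\in\mathcal{U}$ and $r>0$. Then $[L]$ is a strongly unique best approximation to $[T]$ in $\mathcal{U}$ with constant $r$, i.e. $$\|[T]-[U]\|_W\ge\|[T]-[L]\|_W+r\|[U]-[L]\|_W\quad\text{for all }[U]\in\mathcal{U},$$ if and only if for every $[U]\in\mathcal{U}$ there exists $(x^*,x)\in W_{T-L}$ such that $$\operatorname{re}\big(x^*((U-L)x)\big)\le -r\,\|[U]-[L]\|_W.$$
   Context: $\mathcal{K}(X)$ denotes the space of compact linear operators $X\to X$. $\mathcal{B}=B_{X^*}\times B_X$ carries the product of the weak$^*$ topology on $B_{X^*}$ and the weak topology on $B_X$. For a fixed non-empty compact $W\subset\mathcal{B}$ and $L\in\mathcal{K}(X)$ put $\|L\|_W=\sup\{|x^*(Lx)|:(x^*,x)\in W\}$. $\mathcal{W}(X)$ is the quotient of $\mathcal{K}(X)$ by $L\sim T\iff\|L-T\|_W=0$, normed by $\|[L]\|_W=\|L\|_W$. In the complex case $Z=\bigcup_{\theta\in[0,2\pi]}\{(e^{i\theta}x^*,x):(x^*,x)\in W\}$; in the real case $Z=W\cup\{(-x^*,x):(x^*,x)\in W\}$. For $[S]\in\mathcal{W}(X)$, $W_S=\{(x^*,x)\in Z: x^*(Sx)=\|[S]\|_W\}$. The values $x^*(Sx)$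 for $(x^*,x)\in Z$ do not depend on the chosen representatives. $\operatorname{re}$ denotes the real part. *)

From Stdlib Require Import Reals Lra List ClassicalEpsilon.
Open Scope R_scope.

Inductive Kind := KReal | KComplex.

(* complex numbers as pairs (re, im) *)
Definition Cplx : Type := (R * R)%type.

Definition scal (k : Kind) : Type :=
  match k with KReal => R | KComplex => Cplx end.

Definition sadd (k : Kind) : scal k -> scal k -> scal k :=
  match k as k0 return scal k0 -> scal k0 -> scal k0 with
  | KReal => Rplus
  | KComplex => fun a b => (fst a + fst b, snd a + snd b)
  end.

Definition smul (k : Kind) : scal k -> scal k -> scal k :=
  match k as k0 return scal k0 -> scal k0 -> scal k0 with
  | KReal => Rmult
  | KComplex => fun a b => (fst a * fst b - snd a * snd b,
                            fst a * snd b + snd a * fst b)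
  end.

Definition sopp (k : Kind) : scal k -> scal k :=
  match k as k0 return scal k0 -> scal k0 with
  | KReal => Ropp
  | KComplex => fun a => (- fst a, - snd a)
  end.

Definition ssub (k : Kind) (a b : scal k) : scal k := sadd k a (sopp k b).

Definition sofR (k : Kind) : R -> scal k :=
  match k as k0 return R -> scal k0 with
  | KReal => fun a => a
  | KComplex => fun a => (a, 0)
  end.

Definition sone (k : Kind) : scal k := sofR k 1.

Definition sabs (k : Kind) : scal k -> R :=
  match k as k0 return scal k0 -> R with
  | KReal => Rabs
  | KComplex => fun a => sqrt (fst a * fst a + snd a * snd a)
  end.

Definition sre (k : Kind) : scal k -> R :=
  match k as k0 return scal k0 -> R with
  | KReal => fun a => a
  | KComplex => fun a => fst a
  end.

Definition Zscalar (k : Kind) : scal k -> Prop :=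
  match k as k0 return scal k0 -> Prop with
  | KReal => fun a => a = 1 \/ a = -1
  | KComplex => fun a => exists theta, 0 <= theta <= 2 * PI /\ a = (cos theta, sin theta)
  end.

Record NormedSpace (k : Kind) := {
  carrier :> Type;
  vzero : carrier;
  vadd : carrier -> carrier -> carrier;
  vopp : carrier -> carrier;
  vscal : scal k -> carrier -> carrier;
  vnorm : carrier -> R;
  vaddA : forall x y z, vadd x (vadd y z) = vadd (vadd x y) z;
  vaddC : forall x y, vadd x y = vadd y x;
  vadd0 : forall x, vadd x vzero = x;
  vaddN : forall x, vadd x (vopp x) = vzero;
  vscal1 : forall x, vscal (sone k) x = x;
  vscalA : forall a b x, vscal a (vscal b x) = vscal (smul k a b) x;
  vscalDr : forall a x y, vscal a (vadd x y) = vadd (vscal a x) (vscal a y);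
  vscalDl : forall a b x, vscal (sadd k a b) x = vadd (vscal a x) (vscal b x);
  vnorm_ge0 : forall x, 0 <= vnorm x;
  vnorm_eq0 : forall x, vnorm x = 0 -> x = vzero;
  vnorm_scal : forall a x, vnorm (vscal a x) = sabs k a * vnorm x;
  vnorm_tri : forall x y, vnorm (vadd x y) <= vnorm x + vnorm y
}.

Arguments vzero {k X} : rename.
Arguments vadd {k X} _ _ : rename.
Arguments vopp {k X} _ : rename.
Arguments vscal {k X} _ _ : rename.
Arguments vnorm {k X} _ : rename.

Section Banach.
Context {k : Kind} {X : NormedSpace k}.

Definition vsub (x y : X) : X := vadd x (vopp y).

Definition converges (u : nat -> X) (l : X) : Prop :=
  forall eps, 0 < eps -> exists N, forall n, (N <= n)%nat -> vnorm (vsub (u n) l) < eps.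

Definition cauchy (u : nat -> X) : Prop :=
  forall eps, 0 < eps -> exists N, forall n m, (N <= n)%nat -> (N <= m)%nat ->
    vnorm (vsub (u n) (u m)) < eps.

Definition banach : Prop := forall u : nat -> X, cauchy u -> exists l, converges u l.

(* supremum of a set of reals (meaningful when the l.u.b. exists) *)
Definition Rsup (E : R -> Prop) : R := epsilon (inhabits 0) (fun m => is_lub E m).

Definition is_dual (f : X -> scal k) : Prop :=
  (forall x y, f (vadd x y) = sadd k (f x) (f y)) /\
  (forall a x, f (vscal a x) = smul k a (f x)) /\
  (exists C, forall x, sabs k (f x) <= C * vnorm x).

Definition dnorm (f : X -> scal k) : R :=
  Rsup (fun v => exists x, vnorm x <= 1 /\ v = sabs k (f x)).

Definition is_bidual (phi : (X -> scal k) -> scal k) : Prop :=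
  (forall f g, is_dual f -> is_dual g ->
     phi (fun x => sadd k (f x) (g x)) = sadd k (phi f) (phi g)) /\
  (forall a f, is_dual f -> phi (fun x => smul k a (f x)) = smul k a (phi f)) /\
  (exists C, forall f, is_dual f -> sabs k (phi f) <= C * dnorm f).

Definition reflexive : Prop :=
  forall phi, is_bidual phi -> exists x : X, forall f, is_dual f -> phi f = f x.

Definition inB (p : (X -> scal k) * X) : Prop :=
  is_dual (fst p) /\ dnorm (fst p) <= 1 /\ vnorm (snd p) <= 1.

(* relatively open subsets of B for the product of the weak* topology on
   B_{X^*} and the weak topology on B_X (basic neighbourhoods given by
   finitely many points of X and finitely many functionals of X^* ) *)
Definition B_open (O : (X -> scal k) * X -> Prop) : Prop :=
  forall p, inB p -> O p ->
    exists (xs : list X) (fs : list (X -> scal k)) (eps : R),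
      0 < eps /\ (forall f, In f fs -> is_dual f) /\
      forall q, inB q ->
        (forall x, In x xs -> sabs k (ssub k (fst q x) (fst p x)) < eps) ->
        (forall f, In f fs -> sabs k (ssub k (f (snd q)) (f (snd p))) < eps) ->
        O q.

Definition compactB (W : (X -> scal k) * X -> Prop) : Prop :=
  (forall p, W p -> inB p) /\
  forall (I : Type) (O : I -> (X -> scal k) * X -> Prop),
    (forall i, B_open (O i)) ->
    (forall p, W p -> exists i, O i p) ->
    exists l : list I, forall p, W p -> exists i, In i l /\ O i p.

Definition compact_op (L : X -> X) : Prop :=
  (forall x y, L (vadd x y) = vadd (L x) (L y)) /\
  (forall a x, L (vscal a x) = vscal a (L x)) /\
  (forall u : nat -> X, (forall n, vnorm (u n) <= 1) ->
     exists phi : nat -> nat, (forall n, (phi n < phi (S n))%nat) /\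
       exists l, converges (fun n => L (u (phi n))) l).

Definition opsub (L T : X -> X) : X -> X := fun x => vsub (L x) (T x).

Definition normW (W : (X -> scal k) * X -> Prop) (L : X -> X) : R :=
  Rsup (fun v => exists p, W p /\ v = sabs k (fst p (L (snd p)))).

Definition inZ (W : (X -> scal k) * X -> Prop) (p : (X -> scal k) * X) : Prop :=
  exists (g : X -> scal k) (lam : scal k),
    Zscalar k lam /\ W (g, snd p) /\ forall y, fst p y = smul k lam (g y).

Definition inWS (W : (X -> scal k) * X -> Prop) (S : X -> X) (p : (X -> scal k) * X) : Prop :=
  inZ W p /\ fst p (S (snd p)) = sofR k (normW W S).

(* A set of classes in W(X) is represented by the (saturated) set of all
   its representatives in K(X). *)
Definition saturated (W : (X -> scal k) * X -> Prop) (U : (X -> X) -> Prop) : Prop :=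
  forall L T, U L -> compact_op T -> normW W (opsub L T) = 0 -> U T.

Definition convexU (U : (X -> X) -> Prop) : Prop :=
  forall L1 L2 t, U L1 -> U L2 -> 0 <= t <= 1 ->
    U (fun x => vadd (vscal (sofR k t) (L1 x)) (vscal (sofR k (1 - t)) (L2 x))).

End Banach.

Arguments banach {k} X.
Arguments reflexive {k} X.

(** If a point of [W_{T-L}] witnesses the inequality for [U], evaluating
    [T - U = (T - L) - (U - L)] there gives
    [||T-U||_W >= re x*((T-L)x) - re x*((U-L)x) >= ||T-L||_W + r ||U-L||_W].

    Conversely, suppose that for some [U] no witness exists.  The maps
    [(x*,x) |-> x*((T-L)x)] and [(x*,x) |-> x*((U-L)x)] are continuous on
    [B] because the operators are compact, so compactness of [W] and of the
    unimodular scalars yields a uniform [delta > 0] with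
    [max (||T-L||_W - re l x*((T-L)x), re l x*((U-L)x) + r ||U-L||_W) >= delta]
    for all [(x*,x)] in [W] and unimodular [l].  Testing strong uniqueness on
    [L + t (U - L)], at a point where [|x*((T - L - t(U-L))x)|] is almost
    maximal and with [l] rotating this value onto the positive reals, forces
    that maximum below [t (||U-L||_W + 1)], which is [< delta] for small [t]. *)

From Stdlib Require Import Reals Lra Lia List RList ClassicalEpsilon Classical.
From Coquelicot Require Import Complex.
Open Scope R_scope.

Ltac scal_ring :=
  match goal with k : Kind |- _ => destruct k end; simpl in *;
  [ ring
  | repeat match goal with
           | a : scal KComplex |- _ => destruct a
           | a : Cplx |- _ => destruct a
           | a : (R * R)%type |- _ => destruct a
           end;
    simpl; first [ ring | f_equal; ring ] ].

Lemma Rsup_is_lub (E : R -> Prop) :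
  (exists v, E v) -> (exists B, forall v, E v -> v <= B) -> is_lub E (Rsup E).
Proof.
  intros Hne [B HB].
  destruct (completeness E) as [m Hm]; [exists B; exact HB | exact Hne |].
  exact (epsilon_spec (inhabits 0) (fun m => is_lub E m) (ex_intro _ m Hm)).
Qed.

Lemma is_lub_approx (E : R -> Prop) m eps :
  is_lub E m -> 0 < eps -> exists v, E v /\ m - eps < v.
Proof.
  intros [_ Hleast] He. apply NNPP; intro Hn.
  enough (m <= m - eps) by lra.
  apply Hleast. intros v Hv. apply Rnot_lt_le. intro. apply Hn. exists v; auto.
Qed.

Lemma continuity_pt_Rmax (f g : R -> R) x :
  continuity_pt f x -> continuity_pt g x -> continuity_pt (fun t => Rmax (f t) (g t)) x.
Proof.
  intros Hf Hg.
  apply (continuity_pt_locally_ext (fun t => / 2 * (f t + g t + Rabs (f t - g t))) _ 1);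
    [lra | | reg].
  intros y _. unfold Rmax, Rabs. destruct Rle_dec, Rcase_abs; lra.
Qed.

Lemma unit_circle_angle u v :
  u * u + v * v = 1 -> exists t, 0 <= t <= 2 * PI /\ cos t = u /\ sin t = v.
Proof.
  intros H. assert (Hu : -1 <= u <= 1) by nra.
  pose proof (acos_bound u). pose proof PI_RGT_0.
  assert (Hs : sin (acos u) = Rabs v).
  { rewrite sin_acos, <- sqrt_Rsqr_abs by exact Hu. f_equal. unfold Rsqr. lra. }
  destruct (Rle_or_lt 0 v).
  - exists (acos u). rewrite cos_acos, Hs, Rabs_right by (auto; lra). split; [lra | auto].
  - exists (2 * PI - acos u).
    rewrite cos_minus, sin_minus, cos_2PI, sin_2PI, cos_acos, Hs, Rabs_left by (auto; lra).
    split; [lra | split; ring].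
Qed.

Lemma gap_small_perturbation A B M d r t :
  A <= M -> - B <= d -> 0 <= d -> 0 < r -> 0 < t <= 1 ->
  M + r * (t * d) - t * t < A - t * B ->
  Rmax (M - A) (B + r * d) < t * (d + 1).
Proof.
  intros HA HB Hd Hr Ht H.
  assert (Hrtd : 0 <= r * (t * d)) by (apply Rmult_le_pos; nra).
  assert (HBt : B + r * d < t) by (apply (Rmult_lt_reg_l t); nra).
  unfold Rmax; destruct Rle_dec; nra.
Qed.

Lemma sabs_complex (a : scal KComplex) : sabs KComplex a = Cmod a.
Proof. destruct a as [x y]. unfold Cmod. simpl. f_equal. ring. Qed.

Section Scalars.
Variable k : Kind.

Lemma sabs_ge0 a : 0 <= sabs k a.
Proof. destruct k; [apply Rabs_pos | apply sqrt_pos]. Qed.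

Lemma sabs_ofR x : sabs k (sofR k x) = Rabs x.
Proof. destruct k; [reflexivity |]. rewrite sabs_complex. apply Cmod_R. Qed.

Lemma sabs_mul a b : sabs k (smul k a b) = sabs k a * sabs k b.
Proof. destruct k; [apply Rabs_mult |]. rewrite !sabs_complex. apply Cmod_mult. Qed.

Lemma sabs_add a b : sabs k (sadd k a b) <= sabs k a + sabs k b.
Proof. destruct k; [apply Rabs_triang |]. rewrite !sabs_complex. apply Cmod_triangle. Qed.

Lemma sabs_opp a : sabs k (sopp k a) = sabs k a.
Proof. destruct k; [apply Rabs_Ropp |]. rewrite !sabs_complex. apply Cmod_opp. Qed.

Lemma sre_le_sabs a : sre k a <= sabs k a.
Proof.
  destruct k; [apply Rle_abs |].
  rewrite sabs_complex. exact (Rle_trans _ _ _ (Rle_abs _) (re_le_Cmod a)).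
Qed.

Lemma Ropp_sabs_le_sre a : - sabs k a <= sre k a.
Proof.
  rewrite <- sabs_opp. enough (sre k (sopp k a) = - sre k a).
  { pose proof (sre_le_sabs (sopp k a)). lra. }
  scal_ring.
Qed.

Lemma sre_ofR x : sre k (sofR k x) = x.
Proof. destruct k; reflexivity. Qed.

Lemma sre_mul_ssub l a b :
  sre k (smul k l (ssub k a b)) = sre k (smul k l a) - sre k (smul k l b).
Proof. unfold ssub. scal_ring. Qed.

Lemma sre_mul_ofR l t a :
  sre k (smul k l (smul k (sofR k t) a)) = t * sre k (smul k l a).
Proof. scal_ring. Qed.

Lemma sabs_ssub_sym a b : sabs k (ssub k a b) = sabs k (ssub k b a).
Proof.
  rewrite <- sabs_opp. f_equal. unfold ssub. scal_ring.
Qed.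

Lemma sabs_ssub_self a : sabs k (ssub k a a) = 0.
Proof.
  replace (ssub k a a) with (sofR k 0) by (unfold ssub; scal_ring).
  rewrite sabs_ofR. apply Rabs_R0.
Qed.

Lemma sabs_ssub_tri a b c :
  sabs k (ssub k a c) <= sabs k (ssub k a b) + sabs k (ssub k b c).
Proof.
  replace (ssub k a c) with (sadd k (ssub k a b) (ssub k b c)) by (unfold ssub; scal_ring).
  apply sabs_add.
Qed.

Lemma sabs_ssub_ssub a1 a2 b1 b2 :
  sabs k (ssub k (ssub k a1 a2) (ssub k b1 b2))
  <= sabs k (ssub k a1 b1) + sabs k (ssub k a2 b2).
Proof.
  replace (ssub k (ssub k a1 a2) (ssub k b1 b2))
    with (sadd k (ssub k a1 b1) (sopp k (ssub k a2 b2))) by (unfold ssub; scal_ring).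
  rewrite <- (sabs_opp (ssub k a2 b2)). apply sabs_add.
Qed.

Lemma Zscalar_sabs l : Zscalar k l -> sabs k l = 1.
Proof.
  destruct k; simpl.
  - intros [-> | ->]; [apply Rabs_R1 | rewrite Rabs_left; lra].
  - intros [t [_ ->]]. simpl.
    rewrite <- sqrt_1. f_equal. rewrite <- (sin2_cos2 t). unfold Rsqr. ring.
Qed.

Lemma sabs_Zscalar_mul l a : Zscalar k l -> sabs k (smul k l a) = sabs k a.
Proof. intros Hl. rewrite sabs_mul, Zscalar_sabs by exact Hl. ring. Qed.

Lemma Zscalar_rotate a : exists l, Zscalar k l /\ sre k (smul k l a) = sabs k a.
Proof.
  destruct k.
  - destruct (Rle_or_lt 0 a).
    + exists 1. split; [now left |]. simpl. rewrite Rabs_right; lra.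
    + exists (-1). split; [now right |]. simpl. rewrite Rabs_left; lra.
  - destruct a as [x y]. set (n := sabs KComplex (x, y)).
    assert (Hnn : n * n = x * x + y * y) by (apply sqrt_sqrt; nra).
    destruct (Req_dec n 0) as [H0 | H0].
    + exists (cos 0, sin 0). split; [exists 0; pose proof PI_RGT_0; split; [lra | auto] |].
      simpl. rewrite cos_0, sin_0. fold n. rewrite H0 in Hnn |- *. nra.
    + destruct (unit_circle_angle (x / n) (- y / n)) as [t [Ht [Hc Hs]]].
      { replace (x / n * (x / n) + - y / n * (- y / n)) with ((x * x + y * y) / (n * n))
          by (field; auto).
        rewrite <- Hnn. field. auto. }
      exists (cos t, sin t). split; [exists t; auto |].
      simpl. fold n. rewrite Hc, Hs.
      replace (x / n * x - - y / n * y) with ((x * x + y * y) / n) by (field; auto).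
      rewrite <- Hnn. field. auto.
Qed.

Lemma sofR_of_sre_ge a M : M <= sre k a -> sabs k a <= M -> a = sofR k M.
Proof.
  destruct k; simpl; intros Hre Habs.
  - pose proof (Rle_abs a). lra.
  - destruct a as [x y]. simpl in *.
    assert (Hsq : sqrt (x * x + y * y) * sqrt (x * x + y * y) = x * x + y * y)
      by (apply sqrt_sqrt; nra).
    pose proof (sqrt_pos (x * x + y * y)).
    assert (x = M) by nra. subst x.
    assert (y * y = 0) by nra. f_equal. nra.
Qed.

(** [kgap M c a b l <= 0] means that rotating by [l] turns [(a, b)] into a
    witness: [M <= re (l a)] and [re (l b) <= - c]. *)
Definition kgap (M c : R) (a b l : scal k) : R :=
  Rmax (M - sre k (smul k l a)) (sre k (smul k l b) + c).

Lemma kgap_le_shift M c a b a' b' l :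
  Zscalar k l -> kgap M c a b l <= kgap M c a' b' l + sabs k (ssub k a a') + sabs k (ssub k b b').
Proof.
  intros Hl. unfold kgap.
  assert (Hlip : forall u v, sre k (smul k l u) - sre k (smul k l v) <= sabs k (ssub k u v)).
  { intros u v. rewrite <- sre_mul_ssub, <- (sabs_Zscalar_mul l) by exact Hl.
    apply sre_le_sabs. }
  pose proof (Hlip a' a) as Ha. rewrite sabs_ssub_sym in Ha.
  pose proof (Hlip b b').
  pose proof (sabs_ge0 (ssub k a a')). pose proof (sabs_ge0 (ssub k b b')).
  unfold Rmax; repeat destruct Rle_dec; lra.
Qed.

(** The unimodular scalars form a compact set: [{1, -1}], or the image of
    [[0, 2 pi]] under [t |-> (cos t, sin t)]. *)
Lemma kgap_uniform M c a b :
  (forall l, Zscalar k l -> 0 < kgap M c a b l) ->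
  exists m, 0 < m /\ forall l, Zscalar k l -> m <= kgap M c a b l.
Proof.
  unfold kgap. destruct k; simpl; intros Hpos.
  - exists (Rmin (Rmax (M - 1 * a) (1 * b + c)) (Rmax (M - -1 * a) (-1 * b + c))). split.
    + apply Rmin_glb_lt; apply Hpos; [now left | now right].
    + intros l [-> | ->]; [apply Rmin_l | apply Rmin_r].
  - destruct a as [a1 a2], b as [b1 b2]. simpl in *.
    set (f := fun t => Rmax (M - (cos t * a1 - sin t * a2)) (cos t * b1 - sin t * b2 + c)).
    pose proof PI_RGT_0.
    destruct (continuity_ab_min f 0 (2 * PI)) as [t0 [Hmin Ht0]]; [lra | |].
    { intros t _. unfold f. apply continuity_pt_Rmax; reg. }
    exists (f t0). split.
    + apply (Hpos (cos t0, sin t0)). exists t0. auto.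
    + intros l [t [Ht ->]]. exact (Hmin t Ht).
Qed.

End Scalars.

Arguments vaddA {k n} x y z.
Arguments vaddC {k n} x y.
Arguments vadd0 {k n} x.
Arguments vaddN {k n} x.
Arguments vscal1 {k n} x.
Arguments vscalA {k n} a b x.
Arguments vscalDr {k n} a x y.
Arguments vscalDl {k n} a b x.
Arguments vnorm_ge0 {k n} x.
Arguments vnorm_eq0 {k n} x _.
Arguments vnorm_scal {k n} a x.
Arguments vnorm_tri {k n} x y.

Section NormedSpace.
Context {k : Kind} {X : NormedSpace k}.
Implicit Types (x y z : X) (f : X -> scal k) (A B : X -> X).

Lemma vadd0l x : vadd vzero x = x.
Proof. rewrite vaddC. apply vadd0. Qed.

Lemma vscal0 x : vscal (sofR k 0) x = vzero.
Proof.
  assert (Hdup : vadd (vscal (sofR k 0) x) (vscal (sofR k 0) x) = vscal (sofR k 0) x).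
  { rewrite <- vscalDl. f_equal. scal_ring. }
  rewrite <- (vaddN (vscal (sofR k 0) x)). rewrite <- Hdup at 2.
  rewrite <- vaddA, vaddN, vadd0. reflexivity.
Qed.

Lemma vopp_scal x : vopp x = vscal (sofR k (-1)) x.
Proof.
  assert (Hsum : vadd x (vscal (sofR k (-1)) x) = vzero).
  { rewrite <- (vscal1 x) at 1. unfold sone. rewrite <- vscalDl.
    replace (sadd k (sofR k 1) (sofR k (-1))) with (sofR k 0) by scal_ring.
    apply vscal0. }
  rewrite <- (vadd0 (vopp x)), <- Hsum, vaddA, (vaddC (vopp x) x), vaddN. apply vadd0l.
Qed.

Lemma vnorm0 : vnorm (@vzero k X) = 0.
Proof. rewrite <- (vscal0 vzero), vnorm_scal, sabs_ofR, Rabs_R0. ring. Qed.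

Lemma vnorm_opp x : vnorm (vopp x) = vnorm x.
Proof. rewrite vopp_scal, vnorm_scal, sabs_ofR, Rabs_left by lra. ring. Qed.

Lemma vopp_vsub x y : vopp (vsub x y) = vsub y x.
Proof.
  unfold vsub. rewrite !vopp_scal, vscalDr, vscalA, vaddC.
  replace (smul k (sofR k (-1)) (sofR k (-1))) with (sone k) by (unfold sone; scal_ring).
  rewrite vscal1. reflexivity.
Qed.

Lemma vnorm_vsub_sym x y : vnorm (vsub x y) = vnorm (vsub y x).
Proof. rewrite <- vopp_vsub. apply vnorm_opp. Qed.

Lemma vnorm_vsub_tri x y z : vnorm (vsub x z) <= vnorm (vsub x y) + vnorm (vsub y z).
Proof.
  replace (vsub x z) with (vadd (vsub x y) (vsub y z)); [apply vnorm_tri |].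
  unfold vsub. rewrite <- vaddA, (vaddA (vopp y)), (vaddC (vopp y) y), vaddN, vadd0l.
  reflexivity.
Qed.

Lemma vnorm_vsub_le x y : vnorm (vsub x y) <= vnorm x + vnorm y.
Proof. unfold vsub. rewrite <- (vnorm_opp y). apply vnorm_tri. Qed.

Lemma vnorm_le_vsub x y : vnorm x <= vnorm (vsub x y) + vnorm y.
Proof.
  replace x with (vadd (vsub x y) y) at 1; [apply vnorm_tri |].
  unfold vsub. rewrite <- vaddA, (vaddC (vopp y) y), vaddN. apply vadd0.
Qed.

Lemma homogeneous_bound f C :
  (forall a x, f (vscal a x) = smul k a (f x)) ->
  (forall x, vnorm x <= 1 -> sabs k (f x) <= C) -> forall y, sabs k (f y) <= C * vnorm y.
Proof.
  intros Hhom HC y. pose proof (vnorm_ge0 y).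
  destruct (Req_dec (vnorm y) 0) as [H0 | H0].
  - rewrite (vnorm_eq0 y H0), vnorm0, <- (vscal0 vzero), Hhom.
    replace (smul k (sofR k 0) (f vzero)) with (sofR k 0) by scal_ring.
    rewrite sabs_ofR, Rabs_R0. lra.
  - set (u := vscal (sofR k (/ vnorm y)) y).
    assert (Hy : y = vscal (sofR k (vnorm y)) u).
    { unfold u. rewrite vscalA.
      replace (smul k (sofR k (vnorm y)) (sofR k (/ vnorm y)))
        with (sofR k (vnorm y * / vnorm y)) by scal_ring.
      rewrite Rinv_r by exact H0. symmetry. apply vscal1. }
    assert (Hu : vnorm u = 1).
    { unfold u. rewrite vnorm_scal, sabs_ofR, Rabs_right; [field; exact H0 |].
      apply Rle_ge, Rlt_le, Rinv_0_lt_compat. lra. }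
    rewrite Hy at 1. rewrite Hhom, sabs_mul, sabs_ofR, Rabs_right by lra.
    rewrite Rmult_comm. apply Rmult_le_compat_r; [lra |]. apply HC. lra.
Qed.

Lemma dual_sub f x y : is_dual f -> f (vsub x y) = ssub k (f x) (f y).
Proof.
  intros [Hadd [Hhom _]]. unfold vsub, ssub. rewrite Hadd, vopp_scal, Hhom.
  f_equal. scal_ring.
Qed.

Lemma dnorm_ub f x : is_dual f -> vnorm x <= 1 -> sabs k (f x) <= dnorm f.
Proof.
  intros [_ [_ [C HC]]] Hx. apply Rsup_is_lub.
  - exists (sabs k (f vzero)), vzero. rewrite vnorm0. split; [lra | auto].
  - exists (Rabs C). intros v [z [Hz ->]].
    apply (Rle_trans _ _ _ (HC z)). pose proof (vnorm_ge0 z).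
    pose proof (Rle_abs C). pose proof (Rabs_pos C). nra.
  - exists x. auto.
Qed.

Lemma dual_bound f y : is_dual f -> dnorm f <= 1 -> sabs k (f y) <= vnorm y.
Proof.
  intros Hf Hd. rewrite <- (Rmult_1_l (vnorm y)).
  apply homogeneous_bound; [apply Hf |].
  intros x Hx. pose proof (dnorm_ub f x Hf Hx). lra.
Qed.

Definition op_bounded A : Prop := exists C, forall x, vnorm x <= 1 -> vnorm (A x) <= C.

(** Otherwise a greedy choice yields a sequence in the unit ball whose images
    are pairwise [eps]-apart, so no subsequence of them converges. *)
Lemma compact_op_totally_bounded A eps : compact_op A -> 0 < eps ->
  exists ys, forall x, vnorm x <= 1 -> exists y, In y ys /\ vnorm (vsub (A x) y) < eps.
Proof.
  intros [_ [_ HA]] He. apply NNPP; intro Hn.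
  assert (Hfar : forall ys : list X, exists x,
            vnorm x <= 1 /\ forall y, In y ys -> eps <= vnorm (vsub (A x) y)).
  { intros ys. apply NNPP; intro H1. apply Hn. exists ys. intros x Hx.
    apply NNPP; intro H2. apply H1. exists x. split; [exact Hx |]. intros y Hy.
    apply Rnot_lt_le. intro. apply H2. exists y; auto. }
  destruct (choice _ Hfar) as [F HF].
  set (prefix := nat_rect (fun _ => list X) nil (fun _ l => F (map A l) :: l)).
  set (u := fun n => F (map A (prefix n))).
  assert (Hsep : forall n i, (i < n)%nat -> eps <= vnorm (vsub (A (u n)) (A (u i)))).
  { intros n i Hi. apply (proj2 (HF (map A (prefix n)))), in_map.
    induction n as [| n IH]; [inversion Hi |].
    destruct (Nat.eq_dec i n) as [-> | Hne]; [now left | right; apply IH; lia]. }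
  destruct (HA u) as [phi [Hphi [l Hl]]]; [intro n; apply HF |].
  destruct (Hl (eps / 2)) as [N HN]; [lra |].
  pose proof (Hsep _ _ (Hphi N)).
  pose proof (HN (S N) (le_S _ _ (le_n N))). pose proof (HN N (le_n N)).
  pose proof (vnorm_vsub_tri (A (u (phi (S N)))) l (A (u (phi N)))).
  rewrite (vnorm_vsub_sym l) in *. lra.
Qed.

Lemma compact_op_bounded A : compact_op A -> op_bounded A.
Proof.
  intros HA. destruct (compact_op_totally_bounded A 1 HA) as [ys Hys]; [lra |].
  exists (1 + MaxRlist (map vnorm ys)). intros x Hx.
  destruct (Hys x Hx) as [y [Hy Hclose]].
  pose proof (vnorm_le_vsub (A x) y).
  pose proof (MaxRlist_P1 (map vnorm ys) (vnorm y) (in_map _ _ _ Hy)). lra.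
Qed.

Lemma op_bounded_sub A B : op_bounded A -> op_bounded B -> op_bounded (opsub A B).
Proof.
  intros [C1 H1] [C2 H2]. exists (C1 + C2). intros x Hx. unfold opsub.
  pose proof (vnorm_vsub_le (A x) (B x)). pose proof (H1 x Hx). pose proof (H2 x Hx). lra.
Qed.

End NormedSpace.

Section TopologyB.
Context {k : Kind} {X : NormedSpace k}.
Local Notation point := ((X -> scal k) * X)%type.
Implicit Types (p q : point) (P : point -> Prop) (W : point -> Prop).

(** [B_open O] is exactly [forall p, inB p -> O p -> Bnbhd p O]. *)
Definition Bnbhd p P : Prop :=
  exists (xs : list X) (fs : list (X -> scal k)) (eps : R),
    0 < eps /\ (forall f, In f fs -> is_dual f) /\
    forall q, inB q ->
      (forall x, In x xs -> sabs k (ssub k (fst q x) (fst p x)) < eps) ->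
      (forall f, In f fs -> sabs k (ssub k (f (snd q)) (f (snd p))) < eps) ->
      P q.

Lemma Bnbhd_mono p P Q : Bnbhd p P -> (forall q, inB q -> P q -> Q q) -> Bnbhd p Q.
Proof.
  intros [xs [fs [e [He [Hfs H]]]]] HPQ.
  exists xs, fs, e. split; [exact He | split; [exact Hfs |]].
  intros q Hq Hx Hf. apply HPQ; auto.
Qed.

Lemma Bnbhd_and p P Q : Bnbhd p P -> Bnbhd p Q -> Bnbhd p (fun q => P q /\ Q q).
Proof.
  intros [xs [fs [e [He [Hfs H]]]]] [xs' [fs' [e' [He' [Hfs' H']]]]].
  exists (xs ++ xs'), (fs ++ fs'), (Rmin e e').
  pose proof (Rmin_l e e'). pose proof (Rmin_r e e').
  split; [apply Rmin_glb_lt; auto | split].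
  - intros f Hf. apply in_app_or in Hf. destruct Hf; auto.
  - intros q Hq Hx Hf. split; [apply H | apply H']; auto;
      intros z Hz; [specialize (Hx z (in_or_app _ _ _ (or_introl Hz)))
                   | specialize (Hf z (in_or_app _ _ _ (or_introl Hz)))
                   | specialize (Hx z (in_or_app _ _ _ (or_intror Hz)))
                   | specialize (Hf z (in_or_app _ _ _ (or_intror Hz)))]; lra.
Qed.

Lemma Bnbhd_self p P : inB p -> Bnbhd p P -> P p.
Proof.
  intros Hp [xs [fs [e [He [_ H]]]]]. apply H; [exact Hp | |];
    intros; rewrite sabs_ssub_self; exact He.
Qed.

Lemma B_open_Bnbhd P : B_open (fun q => Bnbhd q P).
Proof.
  intros p _ [xs [fs [e [He [Hfs H]]]]].
  exists xs, fs, (e / 2). split; [lra | split; [exact Hfs |]].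
  intros q _ Hqx Hqf. exists xs, fs, (e / 2). split; [lra | split; [exact Hfs |]].
  intros q' Hq' Hx Hf. apply H; [exact Hq' | |]; intros z Hz.
  - pose proof (sabs_ssub_tri k (fst q' z) (fst q z) (fst p z)).
    pose proof (Hx z Hz). pose proof (Hqx z Hz). lra.
  - pose proof (sabs_ssub_tri k (z (snd q')) (z (snd q)) (z (snd p))).
    pose proof (Hf z Hz). pose proof (Hqf z Hz). lra.
Qed.

(** Cover [W] by the interiors of the sets [P m], [m > 0], and take the least
    margin occurring in a finite subcover. *)
Lemma compactB_uniform W (P : R -> point -> Prop) :
  compactB W ->
  (forall m m' q, m' <= m -> P m q -> P m' q) ->
  (forall p, W p -> exists m, 0 < m /\ Bnbhd p (P m)) ->
  exists m, 0 < m /\ forall q, W q -> P m q.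
Proof.
  intros [HWB Hcover] Hmono Hloc.
  destruct (Hcover {m : R | 0 < m} (fun i q => Bnbhd q (P (proj1_sig i)))) as [l Hl].
  - intros i. apply B_open_Bnbhd.
  - intros p Hp. destruct (Hloc p Hp) as [m [Hm Hnb]]. exists (exist _ m Hm). exact Hnb.
  - exists (MinRlist (map (@proj1_sig _ _) l)). split.
    + apply MinRlist_P2. intros y Hy. apply in_map_iff in Hy.
      destruct Hy as [[m Hm] [<- _]]. exact Hm.
    + intros q Hq. destruct (Hl q Hq) as [i [Hi Hnb]].
      apply (Hmono (proj1_sig i)); [apply MinRlist_P1, in_map, Hi |].
      exact (Bnbhd_self q _ (HWB q Hq) Hnb).
Qed.

Definition peval (A : X -> X) (q : point) : scal k := fst q (A (snd q)).

Definition Bcontinuous (g : point -> scal k) : Prop :=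
  forall p eps, inB p -> 0 < eps -> Bnbhd p (fun q => sabs k (ssub k (g q) (g p)) < eps).

(** The compactness of [A] is what makes the evaluation jointly continuous:
    approximate [A x] by a finite net, on which [x*] is controlled weak*ly,
    and test [x] against the functional [x0* o A]. *)
Lemma Bcontinuous_peval A : compact_op A -> Bcontinuous (peval A).
Proof.
  intros HA [g0 x0] eps [Hg0 [Hd0 Hx0]] He. unfold peval; simpl.
  destruct (compact_op_totally_bounded A (eps / 4) HA) as [ys Hys]; [lra |].
  destruct (compact_op_bounded A HA) as [C HC].
  pose proof HA as [HAadd [HAhom _]].
  assert (HgA : is_dual (fun z => g0 (A z))).
  { pose proof Hg0 as [Gadd [Ghom _]]. split; [| split].
    - intros x y. rewrite HAadd. apply Gadd.
    - intros a x. rewrite HAhom. apply Ghom.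
    - exists C. apply homogeneous_bound.
      + intros a x. rewrite HAhom. apply Ghom.
      + intros x Hx. eapply Rle_trans; [apply dual_bound; auto | exact (HC x Hx)]. }
  exists ys, ((fun z => g0 (A z)) :: nil), (eps / 4).
  split; [lra | split; [intros f [<- | []]; exact HgA |]].
  intros [g x] [Hg [Hd Hx]] Hxs Hfs. simpl in *.
  destruct (Hys x Hx) as [y [Hy Hclose]].
  specialize (Hxs y Hy). specialize (Hfs _ (or_introl eq_refl)). simpl in Hfs.
  pose proof (dual_bound g (vsub (A x) y) Hg Hd) as Hg_close.
  pose proof (dual_bound g0 (vsub y (A x)) Hg0 Hd0) as Hg0_close.
  rewrite dual_sub in Hg_close, Hg0_close by assumption.
  rewrite vnorm_vsub_sym in Hg0_close.
  pose proof (sabs_ssub_tri k (g (A x)) (g y) (g0 (A x0))).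
  pose proof (sabs_ssub_tri k (g y) (g0 y) (g0 (A x0))).
  pose proof (sabs_ssub_tri k (g0 y) (g0 (A x)) (g0 (A x0))).
  lra.
Qed.

Lemma Bcontinuous_peval_sub A1 A2 :
  compact_op A1 -> compact_op A2 -> Bcontinuous (peval (opsub A1 A2)).
Proof.
  intros H1 H2 p eps Hp He.
  eapply Bnbhd_mono; [apply Bnbhd_and;
    [apply (Bcontinuous_peval A1 H1 p (eps / 2))
    | apply (Bcontinuous_peval A2 H2 p (eps / 2))]; auto; lra |].
  intros q [Hq _] [Ha Hb]. destruct Hp as [Hp _].
  unfold peval, opsub in *. rewrite !dual_sub by assumption.
  pose proof (sabs_ssub_ssub k (fst q (A1 (snd q))) (fst q (A2 (snd q)))
                               (fst p (A1 (snd p))) (fst p (A2 (snd p)))).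
  lra.
Qed.

Lemma compactB_kgap W (a b : point -> scal k) M c :
  compactB W -> Bcontinuous a -> Bcontinuous b ->
  (forall w l, W w -> Zscalar k l -> 0 < kgap k M c (a w) (b w) l) ->
  exists delta, 0 < delta /\
    forall w l, W w -> Zscalar k l -> delta <= kgap k M c (a w) (b w) l.
Proof.
  intros HW Ha Hb Hpos.
  destruct (compactB_uniform W
              (fun m q => forall l, Zscalar k l -> m <= kgap k M c (a q) (b q) l))
    as [delta [Hdelta Hunif]]; [exact HW | | | eauto].
  - intros m m' q Hm' Hq l Hl. specialize (Hq l Hl). lra.
  - intros p Hp. pose proof (proj1 HW p Hp) as HpB.
    destruct (kgap_uniform k M c (a p) (b p) (fun l Hl => Hpos p l Hp Hl)) as [m [Hm Hmp]].
    exists (m / 2). split; [lra |].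
    eapply Bnbhd_mono;
      [apply Bnbhd_and; [apply (Ha p (m / 4)) | apply (Hb p (m / 4))]; auto; lra |].
    intros q _ [Hqa Hqb] l Hl.
    pose proof (kgap_le_shift k M c (a p) (b p) (a q) (b q) l Hl) as Hshift.
    rewrite (sabs_ssub_sym k (a p)), (sabs_ssub_sym k (b p)) in Hshift.
    pose proof (Hmp l Hl). lra.
Qed.

End TopologyB.

Section SeminormW.
Context {k : Kind} {X : NormedSpace k}.
Local Notation point := ((X -> scal k) * X)%type.
Variable W : point -> Prop.
Hypothesis HW : compactB W.
Hypothesis HWne : exists p, W p.

Lemma normW_is_lub A : op_bounded A ->
  is_lub (fun v => exists p, W p /\ v = sabs k (peval A p)) (normW W A).
Proof.
  intros [C HC]. destruct HWne as [p0 Hp0].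
  apply Rsup_is_lub; [exists (sabs k (peval A p0)), p0; auto |].
  exists C. intros v [p [Hp ->]]. destruct (proj1 HW p Hp) as [Hd [Hn Hx]].
  exact (Rle_trans _ _ _ (dual_bound _ _ Hd Hn) (HC _ Hx)).
Qed.

Lemma normW_ub A p : op_bounded A -> W p -> sabs k (peval A p) <= normW W A.
Proof. intros HA Hp. apply (normW_is_lub A HA). exists p; auto. Qed.

Lemma normW_ge0 A : op_bounded A -> 0 <= normW W A.
Proof.
  intros HA. destruct HWne as [p Hp].
  exact (Rle_trans _ _ _ (sabs_ge0 k _) (normW_ub A p HA Hp)).
Qed.

Lemma normW_approx A eps : op_bounded A -> 0 < eps ->
  exists p, W p /\ normW W A - eps < sabs k (peval A p).
Proof.
  intros HA He. destruct (is_lub_approx _ _ _ (normW_is_lub A HA) He) as [v [[p [Hp ->]] Hv]].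
  exists p. auto.
Qed.

Lemma normW_scale_le A B c : op_bounded A -> op_bounded B -> 0 < c ->
  (forall q, W q -> c * sabs k (peval B q) <= sabs k (peval A q)) ->
  c * normW W B <= normW W A.
Proof.
  intros HA HB Hc Hpt.
  assert (Hcancel : c * (normW W A / c) = normW W A) by (field; lra).
  enough (Hdiv : normW W B <= normW W A / c).
  { rewrite <- Hcancel. apply Rmult_le_compat_l; lra. }
  apply (normW_is_lub B HB). intros v [q [Hq ->]].
  apply (Rmult_le_reg_l c); [exact Hc |]. rewrite Hcancel.
  exact (Rle_trans _ _ _ (Hpt q Hq) (normW_ub A q HA Hq)).
Qed.

End SeminormW.

Section StrongUniqueness.
Context {k : Kind} {X : NormedSpace k}.
Local Notation point := ((X -> scal k) * X)%type.
Variable W : point -> Prop.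
Hypothesis HW : compactB W.

Definition opcomb (t : R) (V L : X -> X) : X -> X :=
  fun x => vadd (vscal (sofR k t) (V x)) (vscal (sofR k (1 - t)) (L x)).

Lemma peval_opcomb_sub t V L q : is_dual (fst q) ->
  peval (opsub (opcomb t V L) L) q = smul k (sofR k t) (peval (opsub V L) q).
Proof.
  intros Hq. pose proof Hq as [Hadd [Hhom _]]. unfold peval, opsub, opcomb.
  rewrite !dual_sub, Hadd, !Hhom by exact Hq. unfold ssub. scal_ring.
Qed.

Lemma peval_sub_opcomb T V L t q : is_dual (fst q) ->
  peval (opsub T (opcomb t V L)) q
  = ssub k (peval (opsub T L) q) (smul k (sofR k t) (peval (opsub V L) q)).
Proof.
  intros Hq. pose proof Hq as [Hadd [Hhom _]]. unfold peval, opsub, opcomb.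
  rewrite !dual_sub, Hadd, !Hhom by exact Hq. unfold ssub. scal_ring.
Qed.

Lemma normW_sub_ge_of_witness T L V r : compact_op T -> compact_op V ->
  (exists p, inWS W (opsub T L) p /\
     sre k (fst p (opsub V L (snd p))) <= - r * normW W (opsub V L)) ->
  normW W (opsub T V) >= normW W (opsub T L) + r * normW W (opsub V L).
Proof.
  intros HT HV [[g' x] [[[g [l [Hl [Hgx Hg']]]] HM] Hre]]. simpl in *.
  assert (Hg : is_dual g) by exact (proj1 (proj1 HW _ Hgx)).
  pose proof (normW_ub W HW (ex_intro _ _ Hgx) (opsub T V) (g, x)
                (op_bounded_sub _ _ (compact_op_bounded _ HT) (compact_op_bounded _ HV)) Hgx)
    as Hub.
  pose proof (sre_le_sabs k (smul k l (g (opsub T V x)))) as Hle.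
  rewrite sabs_Zscalar_mul in Hle by exact Hl.
  rewrite Hg' in HM, Hre. apply (f_equal (sre k)) in HM. rewrite sre_ofR in HM.
  unfold peval, opsub in *; simpl in Hub. rewrite !dual_sub in * by exact Hg.
  rewrite !sre_mul_ssub in HM, Hre, Hle.
  lra.
Qed.

Lemma inWS_rotation S w l : op_bounded S -> W w -> Zscalar k l ->
  normW W S <= sre k (smul k l (peval S w)) ->
  inWS W S (fun y => smul k l (fst w y), snd w).
Proof.
  intros HS Hw Hl Hre. split.
  - exists (fst w), l. simpl. rewrite <- surjective_pairing. auto.
  - apply sofR_of_sre_ge; [exact Hre |].
    change (sabs k (smul k l (peval S w)) <= normW W S).
    rewrite sabs_Zscalar_mul by exact Hl. exact (normW_ub W HW (ex_intro _ _ Hw) S w HS Hw).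
Qed.

Lemma kgap_small_of_sub_opcomb T L V r t :
  (exists p, W p) -> compact_op T -> compact_op L -> compact_op V ->
  compact_op (opcomb t V L) -> 0 < r -> 0 < t <= 1 ->
  normW W (opsub T (opcomb t V L))
    >= normW W (opsub T L) + r * normW W (opsub (opcomb t V L) L) ->
  exists w l, W w /\ Zscalar k l /\
    kgap k (normW W (opsub T L)) (r * normW W (opsub V L))
      (peval (opsub T L) w) (peval (opsub V L) w) l < t * (normW W (opsub V L) + 1).
Proof.
  intros HWne HT HL HV HLt Hr Ht Hsu.
  pose proof (op_bounded_sub _ _ (compact_op_bounded _ HT) (compact_op_bounded _ HL)) as HbTL.
  pose proof (op_bounded_sub _ _ (compact_op_bounded _ HV) (compact_op_bounded _ HL)) as HbVL.
  pose proof (compact_op_bounded _ HLt) as HbLt.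
  set (M := normW W (opsub T L)) in *. set (d := normW W (opsub V L)) in *.
  pose proof (normW_ge0 W HW HWne _ HbVL) as Hd. fold d in Hd.
  assert (Hdt : t * d <= normW W (opsub (opcomb t V L) L)).
  { apply (normW_scale_le W HW HWne);
      [apply op_bounded_sub; [exact HbLt | apply compact_op_bounded, HL] | exact HbVL | lra |].
    intros q Hq. rewrite peval_opcomb_sub by exact (proj1 (proj1 HW q Hq)).
    rewrite sabs_mul, sabs_ofR, Rabs_right by lra. lra. }
  destruct (normW_approx W HW HWne (opsub T (opcomb t V L)) (t * t)) as [w [Hw Happrox]];
    [apply op_bounded_sub; [apply compact_op_bounded, HT | exact HbLt] | nra |].
  rewrite peval_sub_opcomb in Happrox by exact (proj1 (proj1 HW w Hw)).
  destruct (Zscalar_rotate k (ssub k (peval (opsub T L) w)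
                                  (smul k (sofR k t) (peval (opsub V L) w)))) as [l [Hl Hrot]].
  rewrite <- Hrot, sre_mul_ssub, sre_mul_ofR in Happrox.
  exists w, l. split; [exact Hw | split; [exact Hl |]].
  apply gap_small_perturbation; [| | exact Hd | exact Hr | exact Ht |].
  - pose proof (normW_ub W HW HWne _ _ HbTL Hw) as Hub.
    rewrite <- (sabs_Zscalar_mul k l _ Hl) in Hub. fold M in Hub.
    pose proof (sre_le_sabs k (smul k l (peval (opsub T L) w))). lra.
  - pose proof (Ropp_sabs_le_sre k (smul k l (peval (opsub V L) w))).
    rewrite (sabs_Zscalar_mul k l _ Hl) in *.
    pose proof (normW_ub W HW HWne _ _ HbVL Hw) as Hub. fold d in Hub. lra.
  - assert (r * (t * d) <= r * normW W (opsub (opcomb t V L) L))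
      by (apply Rmult_le_compat_l; lra).
    fold M in Hsu. lra.
Qed.

Lemma rotation_witness_of_strong_unique (U : (X -> X) -> Prop) T L V r :
  (exists p, W p) -> (forall V, U V -> compact_op V) -> convexU U ->
  compact_op T -> U L -> U V -> 0 < r ->
  (forall V', U V' ->
     normW W (opsub T V') >= normW W (opsub T L) + r * normW W (opsub V' L)) ->
  exists w l, W w /\ Zscalar k l /\
    normW W (opsub T L) <= sre k (smul k l (peval (opsub T L) w)) /\
    sre k (smul k l (peval (opsub V L) w)) <= - r * normW W (opsub V L).
Proof.
  intros HWne HU Hconv HT HLU HVU Hr Hsu.
  pose proof (HU L HLU) as HL. pose proof (HU V HVU) as HV.
  set (M := normW W (opsub T L)) in *. set (d := normW W (opsub V L)) in *.
  pose proof (normW_ge0 W HW HWne _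
                (op_bounded_sub _ _ (compact_op_bounded _ HV) (compact_op_bounded _ HL))) as Hd.
  fold d in Hd.
  apply NNPP; intro Hno.
  assert (Hpos : forall w l, W w -> Zscalar k l ->
            0 < kgap k M (r * d) (peval (opsub T L) w) (peval (opsub V L) w) l).
  { intros w l Hw Hl. unfold kgap. apply Rnot_le_lt. intro Hle. apply Hno. exists w, l.
    pose proof (Rmax_l (M - sre k (smul k l (peval (opsub T L) w)))
                       (sre k (smul k l (peval (opsub V L) w)) + r * d)).
    pose proof (Rmax_r (M - sre k (smul k l (peval (opsub T L) w)))
                       (sre k (smul k l (peval (opsub V L) w)) + r * d)).
    repeat split; auto; lra. }
  destruct (compactB_kgap W _ _ M (r * d) HW (Bcontinuous_peval_sub T L HT HL)
              (Bcontinuous_peval_sub V L HV HL) Hpos) as [delta [Hdelta Hgap]].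
  set (t := Rmin 1 (delta / (d + 2))).
  assert (Ht : 0 < t <= 1).
  { split; [apply Rmin_glb_lt; [lra | apply Rdiv_lt_0_compat; lra] | apply Rmin_l]. }
  assert (Htd : t * (d + 1) < delta).
  { pose proof (Rmin_r 1 (delta / (d + 2))) as Ht'. fold t in Ht'.
    apply (Rmult_le_compat_r (d + 2)) in Ht'; [| lra].
    replace (delta / (d + 2) * (d + 2)) with delta in Ht' by (field; lra). nra. }
  assert (HLt : U (opcomb t V L)) by (apply Hconv; auto; lra).
  destruct (kgap_small_of_sub_opcomb T L V r t HWne HT HL HV (HU _ HLt) Hr Ht (Hsu _ HLt))
    as [w [l [Hw [Hl Hsmall]]]].
  pose proof (Hgap w l Hw Hl). fold M d in Hsmall. lra.
Qed.

End StrongUniqueness.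

Theorem theorem2p3 (k : Kind) (X : NormedSpace k)
  (W : (X -> scal k) * X -> Prop) (U : (X -> X) -> Prop)
  (T L : X -> X) (r : R) :
  banach X -> reflexive X ->
  compactB W -> (exists p, W p) ->
  (forall V, U V -> compact_op V) -> saturated W U ->
  convexU U -> (exists V, U V) ->
  compact_op T -> U L -> 0 < r ->
  ((forall V, U V ->
      normW W (opsub T V) >= normW W (opsub T L) + r * normW W (opsub V L)) <->
   (forall V, U V ->
      exists p, inWS W (opsub T L) p /\
        sre k (fst p (opsub V L (snd p))) <= - r * normW W (opsub V L))).
Proof.
  intros _ _ HW HWne HU _ Hconv _ HT HL Hr. split.
  - intros Hsu V HV.
    destruct (rotation_witness_of_strong_unique W HW U T L V r HWne HU Hconv HT HL HV Hr Hsu)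
      as [w [l [Hw [Hl [HM Hre]]]]].
    exists (fun y => smul k l (fst w y), snd w). split; [| exact Hre].
    apply inWS_rotation; auto.
    apply op_bounded_sub; apply compact_op_bounded; auto.
  - intros Hwit V HV. apply normW_sub_ge_of_witness; auto.
Qed.
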